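(* Let $T_1,T_2,\dots,T_{2^n}$ be any enumeration of all subsets of $N=\{1,\dots,n\}$ such that $T_i\subseteq T_j$ implies $i\le j$. Then every $q\in P_n$ can be written as $q=q_1q_2\cdots q_{2^n}$, where for each $j$, $q_j\in P_n$ is a (possibly empty, hence equal to $1$) product of monic commutators each of which has support exactly $T_j$.
   Context: $P_n$ denotes the pure braid group on $n$ strands, generated by elements $p_{a,b}$ for $1\le a<b\le n$ subject to the relations: (A) $p_{a,b}p_{a,c}p_{b,c}=p_{a,c}p_{b,c}p_{a,b}=p_{b,c}p_{a,b}p_{a,c}$ for $1\le a<b<c\le n$; (B) $p_{a,b}p_{c,d}=p_{c,d}p_{a,b}$ and $p_{a,d}p_{b,c}=p_{b,c}p_{a,d}$ for $1\le a<b<c<d\le n$; (C) $p_{a,c}p_{b,c}^{-1}p_{b,d}p_{b,c}=p_{b,c}^{-1}p_{b,d}p_{b,c}p_{a,c}$ for $1\le a<b<c<d\le n$. For $S\subseteq N$, $P_S$ is the subgroup generated by the $p_{a,b}$ with $a,b\in S$. Commutator convention: $[x,y]=x^{-1}y^{-1}xy$. Monic commutators are defined recursively: each $p_{a,b}$ and $p_{a,b}^{-1}$ ($1\le a<b\le n$) is a monic commutator; if $x,y$ are monic commutators and $[x,y]\neq1$, then $[x,y]$ is a monic commutator. The support $\sigma(x)$ of $x\in P_n$ is the intersection of all $S\subseteq N$ such that $x\in P_S$. *)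

(* The pure braid group P_n is given by the presentation in the
   paper: elements are words in the letters p_{a,b}^{±1}, modulo the smallest
   congruence containing free cancellation and the relations (A),(B),(C).
   Strand indices 1..n are represented by 'I_n (0-based). *)
From mathcomp Require Import all_boot.
Set Implicit Arguments. Unset Strict Implicit. Unset Printing Implicit Defensive.

Section PureBraid.
Variable n : nat.

(* a letter (a, b, s) stands for p_{a,b} if s = true, p_{a,b}^{-1} if s = false *)
Definition letter := ('I_n * 'I_n * bool)%type.
Definition word := seq letter.

Definition linv (x : letter) : letter := (x.1.1, x.1.2, ~~ x.2).
Definition winv (w : word) : word := rev (map linv w).

Definition pw (a b : 'I_n) : word := [:: (a, b, true)].
Definition pwi (a b : 'I_n) : word := [:: (a, b, false)].

Definition valid_letter (x : letter) : bool := (x.1.1 < x.1.2)%N.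
Definition valid_word (w : word) : bool := all valid_letter w.

Inductive pb_eq : word -> word -> Prop :=
| pb_refl w : pb_eq w w
| pb_sym u v : pb_eq u v -> pb_eq v u
| pb_trans u v w : pb_eq u v -> pb_eq v w -> pb_eq u w
| pb_cat u u' v v' : pb_eq u u' -> pb_eq v v' -> pb_eq (u ++ v) (u' ++ v')
| pb_cancel x : pb_eq [:: x; linv x] [::]
| pb_relA1 (a b c : 'I_n) : (a < b < c)%N ->
    pb_eq (pw a b ++ pw a c ++ pw b c) (pw a c ++ pw b c ++ pw a b)
| pb_relA2 (a b c : 'I_n) : (a < b < c)%N ->
    pb_eq (pw a c ++ pw b c ++ pw a b) (pw b c ++ pw a b ++ pw a c)
| pb_relB1 (a b c d : 'I_n) : [&& (a < b)%N, (b < c)%N & (c < d)%N] ->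
    pb_eq (pw a b ++ pw c d) (pw c d ++ pw a b)
| pb_relB2 (a b c d : 'I_n) : [&& (a < b)%N, (b < c)%N & (c < d)%N] ->
    pb_eq (pw a d ++ pw b c) (pw b c ++ pw a d)
| pb_relC (a b c d : 'I_n) : [&& (a < b)%N, (b < c)%N & (c < d)%N] ->
    pb_eq (pw a c ++ pwi b c ++ pw b d ++ pw b c)
          (pwi b c ++ pw b d ++ pw b c ++ pw a c).

Definition wcomm (x y : word) : word := winv x ++ winv y ++ x ++ y.

Inductive ctree : Type :=
| CLeaf of 'I_n & 'I_n & bool
| CNode of ctree & ctree.

Fixpoint ceval (t : ctree) : word :=
  match t with
  | CLeaf a b s => [:: (a, b, s)]
  | CNode x y => wcomm (ceval x) (ceval y)
  end.

Fixpoint monic_comm (t : ctree) : Prop :=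
  match t with
  | CLeaf a b _ => (a < b)%N
  | CNode x y => monic_comm x /\ monic_comm y /\ ~ pb_eq (ceval t) [::]
  end.

Definition in_PS (S : {set 'I_n}) (w : word) : Prop :=
  exists w', pb_eq w w' /\ valid_word w' /\
             all (fun x : letter => (x.1.1 \in S) && (x.1.2 \in S)) w'.

(* sigma(w) = T, sigma(w) being the intersection of all S with w in P_S *)
Definition support_is (w : word) (T : {set 'I_n}) : Prop :=
  forall i : 'I_n, (forall S, in_PS S w -> i \in S) <-> i \in T.

End PureBraid.

Fixpoint all_prop {T : Type} (P : T -> Prop) (s : seq T) : Prop :=
  match s with
  | [::] => True
  | x :: s' => P x /\ all_prop P s'
  end.

(* Every letter p_{a,b}^{±1} of q is a monic commutator.  Give each monic
   commutator c the level j with T_j = strands c.  To push c of level m to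
   the left past z of higher level, use z c = c z [z,c]: the strands of [z,c]
   contain those of z, so [z,c] again has level > m (and a trivial [z,c] is
   simply dropped, so everything stays monic).  Collecting the levels one by
   one sorts q.  Finally the support of a monic commutator is exactly its set
   of strands: forgetting a strand i is a well-defined endomorphism of P_n
   which kills every commutator involving strand i and fixes P_S for i \notin S,
   so a monic commutator in such a P_S would be trivial. *)
From mathcomp Require Import all_boot zify.
From Stdlib Require Import Classical_Prop.
Set Implicit Arguments. Unset Strict Implicit. Unset Printing Implicit Defensive.

Section GroupLaws.
Variable n : nat.
Implicit Types (u v w : word n).

Lemma pb_catl u v v' : pb_eq v v' -> pb_eq (u ++ v) (u ++ v').
Proof. by move=> h; apply: pb_cat (pb_refl _) h. Qed.

Lemma pb_catr u u' v : pb_eq u u' -> pb_eq (u ++ v) (u' ++ v).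
Proof. by move=> h; apply: pb_cat h (pb_refl _). Qed.

Lemma linvK : involutive (@linv n).
Proof. by case=> [[a b] s]; rewrite /linv /= negbK. Qed.

Lemma winvK : involutive (@winv n).
Proof.
move=> w; rewrite /winv map_rev revK -map_comp.
by rewrite (eq_map (g := id)) ?map_id // => x /=; rewrite linvK.
Qed.

Lemma pb_mulV u : pb_eq (u ++ winv u) [::].
Proof.
elim: u => [|x u IH]; first exact: pb_refl.
have -> : (x :: u) ++ winv (x :: u) = [:: x] ++ (u ++ winv u) ++ [:: linv x].
  by rewrite /winv /= rev_cons -cats1 /= -catA.
apply: pb_trans (pb_catl _ (pb_catr _ IH)) _; exact: pb_cancel.
Qed.

Lemma pb_Vmul u : pb_eq (winv u ++ u) [::].
Proof. by have := pb_mulV (winv u); rewrite winvK. Qed.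

Lemma pb_winv_nil u : pb_eq u [::] -> pb_eq (winv u) [::].
Proof.
move=> h; rewrite -[winv u]cats0.
apply: pb_trans (pb_catl _ (pb_sym h)) _; exact: pb_Vmul.
Qed.

Lemma pb_commute u v : pb_eq (v ++ u) (u ++ v ++ wcomm v u).
Proof.
apply: pb_sym; rewrite /wcomm.
rewrite (_ : _ ++ _ = u ++ ((v ++ winv v) ++ (winv u ++ (v ++ u)))); last by rewrite !catA.
apply: pb_trans (pb_catl _ (pb_catr _ (pb_mulV v))) _ => /=.
rewrite catA; apply: pb_trans (pb_catr _ (pb_mulV u)) _; exact: pb_refl.
Qed.

End GroupLaws.

Section ForgetStrand.
Variables (n : nat) (i : 'I_n).
Implicit Types (u v w : word n).

Definition forget w : word n :=
  filter (fun x : letter n => (x.1.1 != i) && (x.1.2 != i)) w.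

Lemma forget_cat u v : forget (u ++ v) = forget u ++ forget v.
Proof. exact: filter_cat. Qed.

Lemma forget_winv w : forget (winv w) = winv (forget w).
Proof. by rewrite /forget /winv filter_rev filter_map. Qed.

Ltac strand_cases :=
  rewrite /forget /=;
  repeat match goal with
  | |- context [?a != i] => case: (eqVneq a i) => ?
  end;
  rewrite /=; try (subst; exfalso; lia); try exact: pb_refl.

Lemma forget_pb_eq u v : pb_eq u v -> pb_eq (forget u) (forget v).
Proof.
elim=> {u v}.
- by move=> w; apply: pb_refl.
- by move=> u v _; apply: pb_sym.
- by move=> u v w _ h1 _; apply: pb_trans h1.
- by move=> u u' v v' _ h1 _ h2; rewrite !forget_cat; apply: pb_cat h1 h2.
- move=> [[a b] s]; rewrite /forget /linv /=.
  by case: ((a != i) && (b != i)); [apply: (pb_cancel (a, b, s)) | apply: pb_refl].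
- by move=> a b c hab; strand_cases; apply: pb_relA1.
- by move=> a b c hab; strand_cases; apply: pb_relA2.
- by move=> a b c d habcd; strand_cases; apply: pb_relB1.
- by move=> a b c d habcd; strand_cases; apply: pb_relB2.
- move=> a b c d habcd; strand_cases; last by apply: pb_relC.
  (* forgetting strand d leaves p_{a,c} p_{b,c}^-1 p_{b,c} = p_{b,c}^-1 p_{b,c} p_{a,c} *)
  apply: (pb_trans (v := [:: (a, c, true)])).
    by have := pb_catl [:: (a, c, true)] (pb_cancel (b, c, false)); rewrite cats0.
  exact/pb_sym/(pb_catr [:: (a, c, true)] (pb_cancel (b, c, false))).
Qed.

End ForgetStrand.

Section Support.
Variable n : nat.
Implicit Types (w : word n) (c : ctree n) (S : {set 'I_n}).

Fixpoint strands c : {set 'I_n} :=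
  match c with
  | CLeaf a b _ => [set a; b]
  | CNode x y => strands x :|: strands y
  end.

Definition letter_in S (x : letter n) := (x.1.1 \in S) && (x.1.2 \in S).

Lemma all_winv (P : pred (letter n)) w :
  (forall x, P (linv x) = P x) -> all P (winv w) = all P w.
Proof. by move=> h; rewrite /winv all_rev all_map; apply: eq_all => x /=; rewrite h. Qed.

Lemma letter_in_sub S S' w : S \subset S' -> all (letter_in S) w -> all (letter_in S') w.
Proof. by move=> sSS'; apply: sub_all => x /andP[h1 h2]; rewrite /letter_in !(subsetP sSS'). Qed.

Lemma ceval_strands c : all (letter_in (strands c)) (ceval c).
Proof.
elim: c => [a b s|x IHx y IHy] /=; first by rewrite /letter_in /= set21 set22.
have hx := letter_in_sub (subsetUl (strands x) (strands y)) IHx.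
have hy := letter_in_sub (subsetUr (strands x) (strands y)) IHy.
by rewrite /wcomm !all_cat !all_winv // hx hy.
Qed.

Lemma valid_ceval c : monic_comm c -> valid_word (ceval c).
Proof.
elim: c => [a b s|x IHx y IHy] /=; first by rewrite /valid_word /= andbT.
case=> hx [hy _]; rewrite /valid_word /wcomm !all_cat !all_winv //.
by move: (IHx hx) (IHy hy); rewrite /valid_word => -> ->.
Qed.

Definition letter_parity (a b : 'I_n) w :=
  odd (count (fun x : letter n => x.1 == (a, b)) w).

Lemma pb_eq_parity a b u v : pb_eq u v -> letter_parity a b u = letter_parity a b v.
Proof.
rewrite /letter_parity; elim=> {u v} //.
- by move=> u v w _ -> _ ->.
- by move=> u u' v v' _ h1 _ h2; rewrite !count_cat !oddD h1 h2.
- by move=> [[c d] s]; rewrite /=; case: ((c, d) == (a, b)).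
all: by move=> *; rewrite /=; congr odd; lia.
Qed.

Lemma forget_ceval_strand c i : i \in strands c -> pb_eq (forget i (ceval c)) [::].
Proof.
elim: c => [a b s|x IHx y IHy] /=.
  by case/set2P => ->; rewrite /forget /= eqxx ?andbF; apply: pb_refl.
rewrite /wcomm !forget_cat !forget_winv; case/setUP => hi.
  apply: pb_trans (pb_cat (pb_winv_nil (IHx hi))
                          (pb_catl _ (pb_catr _ (IHx hi)))) _.
  exact: pb_Vmul.
apply: pb_trans (pb_catl _ (pb_cat (pb_winv_nil (IHy hi)) (pb_catl _ (IHy hi)))) _.
rewrite /= cats0; exact: pb_Vmul.
Qed.

Lemma forget_notin i S w : all (letter_in S) w -> i \notin S -> forget i w = w.
Proof.
move=> h hi; apply/all_filterP; apply: sub_all h => x /andP[h1 h2].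
by apply/andP; split; apply: contraNneq hi => <-.
Qed.

Lemma monic_comm_nontrivial c : monic_comm c -> ~ pb_eq (ceval c) [::].
Proof.
case: c => [a b s|x y] /=; last by case=> _ [].
by move=> _ e; have := pb_eq_parity a b e; rewrite /letter_parity /= eqxx.
Qed.

Lemma support_ceval c : monic_comm c -> support_is (ceval c) (strands c).
Proof.
move=> hc i; split.
  apply; exists (ceval c); split; first exact: pb_refl.
  by split; [apply: valid_ceval | apply: ceval_strands].
move=> hi S [w [hw [_ hS]]]; apply/idPn => hiS; apply: (monic_comm_nontrivial hc).
have forget_w : pb_eq w (forget i (ceval c)).
  by rewrite -(forget_notin hS hiS); apply: forget_pb_eq (pb_sym hw).
exact: pb_trans hw (pb_trans forget_w (forget_ceval_strand hi)).
Qed.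

End Support.

Lemma all_prop_cat {X : Type} (P : X -> Prop) s t :
  all_prop P s -> all_prop P t -> all_prop P (s ++ t).
Proof. by elim: s => [|x s IH] //= [h1 h2] ht; split; [|apply: IH]. Qed.

Lemma all_prop_imp {X : Type} (P Q : X -> Prop) s :
  (forall x, P x -> Q x) -> all_prop P s -> all_prop Q s.
Proof. by move=> h; elim: s => [|x s IH] //= [h1 h2]; split; [apply: h|apply: IH]. Qed.

Section Collect.
Variables (n N : nat) (lvl : ctree n -> nat).
Hypothesis lvl_node : forall x y, (lvl x <= lvl (CNode x y))%N.
Hypothesis lvl_lt : forall c, (lvl c < N)%N.

Definition prod (s : seq (ctree n)) : word n := flatten (map (@ceval n) s).

Lemma prod_cons c s : prod (c :: s) = ceval c ++ prod s.
Proof. by []. Qed.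

Lemma prod_cat s t : prod (s ++ t) = prod s ++ prod t.
Proof. by rewrite /prod map_cat flatten_cat. Qed.

Definition at_level m c := monic_comm c /\ lvl c = m.
Definition above_level m c := monic_comm c /\ (m < lvl c)%N.

Lemma commute_past m z x : above_level m z -> at_level m x ->
  exists W, all_prop (above_level m) W /\
    pb_eq (ceval z ++ ceval x) (ceval x ++ ceval z ++ prod W).
Proof.
move=> [hz lz] [hx lx].
have [trivial_comm|nontrivial_comm] := classic (pb_eq (wcomm (ceval z) (ceval x)) [::]).
  exists [::]; split => //; rewrite /prod /= cats0.
  apply: pb_trans (pb_commute _ _) _; apply: pb_catl.
  by rewrite -[X in pb_eq _ X]cats0; apply: pb_catl.
exists [:: CNode z x]; split; last by rewrite /prod /= cats0; apply: pb_commute.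
by split => //; split => //; apply: leq_trans lz (lvl_node z x).
Qed.

Lemma move_past m x Z : all_prop (above_level m) Z -> at_level m x ->
  exists Z', all_prop (above_level m) Z' /\
    pb_eq (prod Z ++ ceval x) (ceval x ++ prod Z').
Proof.
move=> + hx; elim: Z => [|z Z IH] /=.
  by move=> _; exists [::]; split => //; rewrite cats0; apply: pb_refl.
case=> hz /IH [Z1 [hZ1 eZ1]]; have [W [hW eW]] := commute_past hz hx.
exists (z :: W ++ Z1); split; first by split => //; apply: all_prop_cat.
rewrite !prod_cons -catA; apply: pb_trans (pb_catl _ eZ1) _.
rewrite catA; apply: pb_trans (pb_catr _ eW) _.
by rewrite prod_cat !catA; apply: pb_refl.
Qed.

Lemma move_block_past m X Z :
  all_prop (at_level m) X -> all_prop (above_level m) Z ->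
  exists Z', all_prop (above_level m) Z' /\
    pb_eq (prod Z ++ prod X) (prod X ++ prod Z').
Proof.
elim: X Z => [|x X IH] Z /=.
  by move=> _ hZ; exists Z; split => //; rewrite cats0; apply: pb_refl.
case=> hx hX hZ; have [Z1 [hZ1 eZ1]] := move_past hZ hx.
have [Z' [hZ' eZ']] := IH Z1 hX hZ1.
exists Z'; split => //; rewrite prod_cons catA.
apply: pb_trans (pb_catr _ eZ1) _; rewrite -catA.
by apply: pb_trans (pb_catl _ eZ') _; rewrite catA; apply: pb_refl.
Qed.

Lemma split_at_level m s :
  all_prop (fun c => monic_comm c /\ (m <= lvl c)%N) s ->
  exists X Y, all_prop (at_level m) X /\ all_prop (above_level m) Y /\
    pb_eq (prod s) (prod X ++ prod Y).
Proof.
elim: s => [|y s IH] /=.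
  by move=> _; exists [::], [::]; do 2!split => //; apply: pb_refl.
case=> [[hy my] /IH [X [Y [hX [hY e]]]]]; rewrite prod_cons.
case: (ltnP m (lvl y)) => my'.
  have [Z' [hZ' eZ']] := move_block_past hX (conj (conj hy my') I : all_prop _ [:: y]).
  exists X, (Z' ++ Y); split => //; split; first exact: all_prop_cat.
  apply: pb_trans (pb_catl _ e) _; rewrite catA prod_cat catA; apply: pb_catr.
  by move: eZ'; rewrite /prod /= cats0.
have ly : lvl y = m by apply/eqP; rewrite eqn_leq my my'.
exists (y :: X), Y; split; first by [].
by split => //; rewrite prod_cons -catA; apply: pb_catl.
Qed.

Lemma collect_levels k m s : (N - m <= k)%N ->
  all_prop (fun c => monic_comm c /\ (m <= lvl c)%N) s ->
  exists cs : nat -> seq (ctree n),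
    (forall j, all_prop (at_level j) (cs j)) /\
    pb_eq (prod s) (flatten [seq prod (cs j) | j <- iota m (N - m)]).
Proof.
elim: k m s => [|k IH] m s hk hs.
  exists (fun _ => [::]); split => //; rewrite (_ : N - m = 0); last lia.
  case: s hs => [|c s] /=; first by move=> _; apply: pb_refl.
  by case=> [[_ hc] _]; have := lvl_lt c; lia.
have [hNm|hmN] := leqP N m; first by apply: IH; first lia.
have [X [Y [hX [hY e]]]] := split_at_level hs.
have [cs [hcs ecs]] := IH m.+1 Y ltac:(lia) (all_prop_imp (fun c h => h) hY).
exists (fun j => if j == m then X else cs j); split.
  by move=> j; case: eqP => [->|].
rewrite -(subnSK hmN) /= eqxx; apply: pb_trans e (pb_catl _ _).
rewrite (eq_in_map _ (fun j => prod (cs j)) _).1 // => j.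
by rewrite mem_iota => /andP[hj _]; rewrite ifN //; apply/eqP; lia.
Qed.

End Collect.

Definition leaf n (x : letter n) : ctree n := CLeaf x.1.1 x.1.2 x.2.

Lemma prod_leaves n (w : word n) : prod (map (@leaf n) w) = w.
Proof. by elim: w => [|[[a b] s] w IH] //=; rewrite prod_cons IH. Qed.

Theorem mainTheorem10 (n : nat) (T : 'I_(2 ^ n) -> {set 'I_n})
  (hT : bijective T)
  (hmono : forall i j : 'I_(2 ^ n), T i \subset T j -> (i <= j)%N)
  (q : word n) (hq : valid_word q) :
  exists cs : 'I_(2 ^ n) -> seq (ctree n),
    (forall j, all_prop (fun c => monic_comm c /\ support_is (ceval c) (T j)) (cs j)) /\
    pb_eq q (flatten [seq flatten (map (@ceval n) (cs j)) | j <- enum 'I_(2 ^ n)]).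
Proof.
case: hT => g _ hgT.
pose lvl c := val (g (strands c)).
have lvl_node x y : (lvl x <= lvl (CNode x y))%N by apply: hmono; rewrite !hgT subsetUl.
have lvl_lt c : (lvl c < 2 ^ n)%N by apply: ltn_ord.
have hleaves : all_prop (fun c => monic_comm c /\ (0 <= lvl c)%N) (map (@leaf n) q).
  by elim: q hq => [|x q IH] //= /andP[hx /IH].
have [cs [hcs ecs]] := collect_levels lvl_node lvl_lt (leqnn _) hleaves.
exists (fun j => cs (val j)); split.
  move=> j; apply: all_prop_imp (hcs j) => c [hc lc]; split => //.
  have -> : j = g (strands c) by apply: val_inj.
  by rewrite hgT; apply: support_ceval.
rewrite -val_enum_ord -map_comp subn0 in ecs.
by rewrite -[q in pb_eq q _]prod_leaves.
Qed.
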